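(* There is a partition of $\mathbb{R}^3$ into $2^{\aleph_0}$ pairwise disjoint subsets, each of which is arcwise connected and dense in $\mathbb{R}^3$.
   Context: $\mathbb{R}^3$ carries its usual Euclidean topology. *)

From Stdlib Require Import Reals.
Open Scope R_scope.

Definition R3 : Type := (R * R * R)%type.

Definition dist3 (p q : R3) : R :=
  match p, q with
  | (x1, y1, z1), (x2, y2, z2) =>
      sqrt ((x1 - x2)^2 + (y1 - y2)^2 + (z1 - z2)^2)
  end.

Definition continuous_on_unit (f : R -> R3) : Prop :=
  forall t, 0 <= t <= 1 -> forall eps, eps > 0 ->
    exists delta, delta > 0 /\
      forall s, 0 <= s <= 1 -> Rabs (s - t) < delta -> dist3 (f s) (f t) < eps.

(* An arc in A from x to y: a continuous injective map [0,1] -> A with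
   f 0 = x, f 1 = y (continuous injective on the compact [0,1] into the
   Hausdorff R^3 is the same as a topological embedding). *)
Definition is_arc_in (A : R3 -> Prop) (x y : R3) (f : R -> R3) : Prop :=
  continuous_on_unit f /\
  (forall s t, 0 <= s <= 1 -> 0 <= t <= 1 -> f s = f t -> s = t) /\
  (forall t, 0 <= t <= 1 -> A (f t)) /\
  f 0 = x /\ f 1 = y.

Definition arcwise_connected (A : R3 -> Prop) : Prop :=
  forall x y, A x -> A y -> x <> y -> exists f, is_arc_in A x y f.

Definition dense3 (A : R3 -> Prop) : Prop :=
  forall p r, r > 0 -> exists q, A q /\ dist3 p q < r.

(** Let [scramble : R -> R] send an odd multiple of [2^-n] to the [n]-th term
    of an enumeration of the rationals in which every rational recurs
    infinitely often; then on every interval [scramble] comes arbitrarily close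
    to every real value.  Put [g x y = sin (PI x) * scramble y]; the pieces are
    the level sets [z - g x y = i], [i : R].  Since [sin (PI x)] can be chosen
    nonzero and [scramble y] arbitrary, the graph of [g] is dense, hence so is
    every level set.  For fixed [y] a level set contains the graph of the continuous
    function [x |-> i + g x y], and on the integer lines [x = c] it is the flat
    line [z = i]: two points are joined by running along [x] to such a line,
    then along [y], then back along [x]. *)

From Stdlib Require Import Reals Lra Lia ZArith ClassicalEpsilon Cantor.
Open Scope R_scope.

Lemma continuity_pt_eps_delta f t eps : continuity_pt f t -> eps > 0 ->
  exists d, d > 0 /\ forall s, Rabs (s - t) < d -> Rabs (f s - f t) < eps.
Proof.
  intros Hc He.
  destruct (Hc eps He) as [d [Hd H]]; exists d; split; [exact Hd |].
  intros s Hs; destruct (Req_dec s t) as [-> | Hne].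
  - rewrite Rminus_diag, Rabs_R0; exact He.
  - apply H; repeat split; auto.
Qed.

Lemma dist3_le_sum_abs a1 a2 a3 b1 b2 b3 :
  dist3 (a1, a2, a3) (b1, b2, b3) <= Rabs (a1 - b1) + Rabs (a2 - b2) + Rabs (a3 - b3).
Proof.
  simpl.
  pose proof (Rabs_pos (a1 - b1)); pose proof (Rabs_pos (a2 - b2));
    pose proof (Rabs_pos (a3 - b3)).
  rewrite <- (sqrt_pow2 (Rabs (a1 - b1) + Rabs (a2 - b2) + Rabs (a3 - b3))) by lra.
  apply sqrt_le_1_alt.
  pose proof (pow2_abs (a1 - b1)); pose proof (pow2_abs (a2 - b2));
    pose proof (pow2_abs (a3 - b3)).
  nra.
Qed.

Lemma continuous_on_unit_triple X Y Z :
  continuity X -> continuity Y -> continuity Z ->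
  continuous_on_unit (fun t => (X t, Y t, Z t)).
Proof.
  intros HX HY HZ t _ eps He.
  destruct (continuity_pt_eps_delta X t (eps / 3) (HX t)) as [d1 [Hd1 H1]]; [lra |].
  destruct (continuity_pt_eps_delta Y t (eps / 3) (HY t)) as [d2 [Hd2 H2]]; [lra |].
  destruct (continuity_pt_eps_delta Z t (eps / 3) (HZ t)) as [d3 [Hd3 H3]]; [lra |].
  exists (Rmin d1 (Rmin d2 d3)); split; [repeat apply Rmin_pos; assumption |].
  intros s _ Hs.
  pose proof (Rmin_l d1 (Rmin d2 d3)); pose proof (Rmin_r d1 (Rmin d2 d3));
    pose proof (Rmin_l d2 d3); pose proof (Rmin_r d2 d3).
  eapply Rle_lt_trans; [apply dist3_le_sum_abs |].
  specialize (H1 s ltac:(lra)); specialize (H2 s ltac:(lra)); specialize (H3 s ltac:(lra)).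
  lra.
Qed.

(* The projection of [u] onto [[0,1]], written with absolute values so that
   its continuity comes for free. *)
Definition clamp01 (u : R) : R := (Rabs u - Rabs (u - 1) + 1) / 2.

Lemma continuity_clamp01 : continuity clamp01.
Proof.
  unfold clamp01.
  apply continuity_mult; [| apply continuity_const; intros ? ?; reflexivity].
  apply continuity_plus; [| apply continuity_const; intros ? ?; reflexivity].
  apply continuity_minus; [apply Rcontinuity_abs |].
  apply (continuity_comp (fun u => u - 1) Rabs); [| apply Rcontinuity_abs].
  apply continuity_minus; [apply derivable_continuous, derivable_id |].
  apply continuity_const; intros ? ?; reflexivity.
Qed.

Lemma clamp01_le0 u : u <= 0 -> clamp01 u = 0.
Proof. intros; unfold clamp01; rewrite Rabs_left1, Rabs_left1 by lra; lra. Qed.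

Lemma clamp01_id u : 0 <= u <= 1 -> clamp01 u = u.
Proof. intros; unfold clamp01; rewrite Rabs_right, Rabs_left1 by lra; lra. Qed.

Lemma clamp01_ge1 u : 1 <= u -> clamp01 u = 1.
Proof. intros; unfold clamp01; rewrite Rabs_right, Rabs_right by lra; lra. Qed.

Ltac prove_continuity :=
  repeat first
    [ apply continuity_clamp01 | apply (continuity_comp _ clamp01)
    | apply continuity_plus | apply continuity_minus | apply continuity_mult
    | apply derivable_continuous, derivable_id
    | apply continuity_const; intros ? ?; reflexivity ].

Lemma clamp01_phases t : 0 <= t <= 1 ->
  (t <= 1/3 /\ clamp01 (3*t) = 3*t /\ clamp01 (3*t-1) = 0 /\ clamp01 (3*t-2) = 0) \/
  (1/3 <= t <= 2/3 /\ clamp01 (3*t) = 1 /\ clamp01 (3*t-1) = 3*t-1 /\ clamp01 (3*t-2) = 0) \/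
  (2/3 <= t /\ clamp01 (3*t) = 1 /\ clamp01 (3*t-1) = 1 /\ clamp01 (3*t-2) = 3*t-2).
Proof.
  intros Ht; destruct (Rle_dec t (1/3)); [| destruct (Rle_dec t (2/3))].
  - left; rewrite clamp01_id, clamp01_le0, clamp01_le0 by lra; lra.
  - right; left; rewrite clamp01_ge1, clamp01_id, clamp01_le0 by lra; lra.
  - right; right; rewrite clamp01_ge1, clamp01_ge1, clamp01_id by lra; lra.
Qed.

Lemma detour_injective x1 x2 y1 y2 c s t :
  x1 < c -> x2 < c -> y1 <> y2 -> 0 <= s <= 1 -> 0 <= t <= 1 ->
  x1 + (c - x1) * clamp01 (3*s) + (x2 - c) * clamp01 (3*s-2)
    = x1 + (c - x1) * clamp01 (3*t) + (x2 - c) * clamp01 (3*t-2) ->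
  y1 + (y2 - y1) * clamp01 (3*s-1) = y1 + (y2 - y1) * clamp01 (3*t-1) ->
  s = t.
Proof.
  intros Hx1 Hx2 Hy Hs Ht EX EY.
  assert (EB : clamp01 (3*s-1) = clamp01 (3*t-1))
    by (apply (Rmult_eq_reg_l (y2 - y1)); lra).
  destruct (clamp01_phases s Hs) as [[Rs [As [Bs Cs]]] | [[Rs [As [Bs Cs]]] | [Rs [As [Bs Cs]]]]];
  destruct (clamp01_phases t Ht) as [[Rt [At [Bt Ct]]] | [[Rt [At [Bt Ct]]] | [Rt [At [Bt Ct]]]]];
  rewrite As, Cs, At, Ct in EX; rewrite Bs, Bt in EB; nra.
Qed.

Section LevelSets.

Variable g : R -> R -> R.

Definition level_set (i : R) (p : R3) : Prop :=
  let '(x, y, z) := p in z - g x y = i.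

Definition graph_dense : Prop :=
  forall a b w r, r > 0 ->
    exists x y, Rabs (x - a) < r /\ Rabs (y - b) < r /\ Rabs (g x y - w) < r.

Lemma level_set_dense i : graph_dense -> dense3 (level_set i).
Proof.
  intros Hg [[a b] c] r Hr.
  destruct (Hg a b (c - i) (r / 3)) as [x [y [Hx [Hy Hz]]]]; [lra |].
  exists (x, y, i + g x y); split; [simpl; ring |].
  eapply Rle_lt_trans; [apply dist3_le_sum_abs |].
  rewrite <- Rabs_Ropp in Hx, Hy, Hz.
  replace (- (x - a)) with (a - x) in Hx by ring.
  replace (- (y - b)) with (b - y) in Hy by ring.
  replace (- (g x y - (c - i))) with (c - (i + g x y)) in Hz by ring.
  lra.
Qed.

Hypothesis g_continuous : forall y, continuity (fun x => g x y).

Lemma continuity_comp_g X y : continuity X -> continuity (fun t => g (X t) y).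
Proof. intros HX; exact (continuity_comp X (fun x => g x y) HX (g_continuous y)). Qed.

Lemma level_set_arc_along_x i x1 x2 y z1 z2 :
  level_set i (x1, y, z1) -> level_set i (x2, y, z2) -> x1 <> x2 ->
  exists f, is_arc_in (level_set i) (x1, y, z1) (x2, y, z2) f.
Proof.
  simpl; intros H1 H2 Hx.
  exists (fun t => (x1 + t * (x2 - x1), y, i + g (x1 + t * (x2 - x1)) y)).
  split; [| split; [| split; [| split]]].
  - apply continuous_on_unit_triple; [prove_continuity | prove_continuity |].
    apply continuity_plus; [prove_continuity | apply continuity_comp_g; prove_continuity].
  - intros s t _ _ E; injection E as E _.
    apply (Rmult_eq_reg_r (x2 - x1)); lra.
  - intros t _; simpl; ring.
  - f_equal; [f_equal; ring | rewrite Rmult_0_l, Rplus_0_r; lra].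
  - replace (x1 + 1 * (x2 - x1)) with x2 by ring; f_equal; lra.
Qed.

Hypothesis g_zero_lines : forall M, exists c, M < c /\ forall y, g c y = 0.

Lemma level_set_arc_detour i x1 x2 y1 y2 z1 z2 :
  level_set i (x1, y1, z1) -> level_set i (x2, y2, z2) -> y1 <> y2 ->
  exists f, is_arc_in (level_set i) (x1, y1, z1) (x2, y2, z2) f.
Proof.
  simpl; intros H1 H2 Hy.
  destruct (g_zero_lines (Rmax x1 x2)) as [c [Hc Hgc]].
  pose proof (Rmax_l x1 x2); pose proof (Rmax_r x1 x2).
  exists (fun t => (x1 + (c - x1) * clamp01 (3*t) + (x2 - c) * clamp01 (3*t-2),
                    y1 + (y2 - y1) * clamp01 (3*t-1),
                    i + g (x1 + (c - x1) * clamp01 (3*t)) y1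
                      + g (c + (x2 - c) * clamp01 (3*t-2)) y2)).
  split; [| split; [| split; [| split]]].
  - apply continuous_on_unit_triple; [prove_continuity | prove_continuity |].
    apply continuity_plus; [apply continuity_plus |];
      [prove_continuity | apply continuity_comp_g; prove_continuity ..].
  - intros s t Hs Ht E; injection E as EX EY _.
    apply (detour_injective x1 x2 y1 y2 c); lra.
  - intros t Ht; simpl.
    destruct (clamp01_phases t Ht)
      as [[_ [-> [-> ->]]] | [[_ [-> [-> ->]]] | [_ [-> [-> ->]]]]].
    all: rewrite ?Rmult_0_r, ?Rplus_0_r, ?Rmult_1_r.
    all: replace (x1 + (c - x1)) with c by ring;
      replace (y1 + (y2 - y1)) with y2 by ring.
    all: rewrite !Hgc; ring.
  - rewrite Rmult_0_r, Rminus_0_l, !clamp01_le0 by lra.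
    rewrite !Rmult_0_r, !Rplus_0_r, Hgc, Rplus_0_r.
    f_equal; lra.
  - rewrite Rmult_1_r, !clamp01_ge1 by lra.
    rewrite !Rmult_1_r; replace (x1 + (c - x1)) with c by ring.
    replace (c + (x2 - c)) with x2 by ring; replace (y1 + (y2 - y1)) with y2 by ring.
    rewrite Hgc; f_equal; lra.
Qed.

Lemma level_set_arcwise_connected i : arcwise_connected (level_set i).
Proof.
  intros [[x1 y1] z1] [[x2 y2] z2] H1 H2 Hne.
  destruct (Req_dec y1 y2) as [<- | Hy].
  - apply level_set_arc_along_x; auto.
    intros <-; apply Hne; simpl in H1, H2; f_equal; lra.
  - apply level_set_arc_detour; auto.
Qed.

End LevelSets.

(* [n] codes [(m, s)] and [m] codes [(p, q)]; the value is [(p - q) / (s + 1)].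
   Every rational value recurs with arbitrarily large codes. *)
Definition rat_enum (n : nat) : R :=
  let (m, s) := of_nat n in let (p, q) := of_nat m in
  IZR (Z.of_nat p - Z.of_nat q) / INR (S s).

Lemma rat_enum_approx w eps N : eps > 0 ->
  exists n, (N <= n)%nat /\ Rabs (rat_enum n - w) < eps.
Proof.
  intros He.
  destruct (INR_unbounded (Rmax (INR N) (1 / eps))) as [s Hs].
  pose proof (Rmax_l (INR N) (1 / eps)); pose proof (Rmax_r (INR N) (1 / eps)).
  set (d := INR (S s)).
  assert (Hd : INR s < d) by (unfold d; rewrite S_INR; lra).
  assert (Hinv : 0 < 1 / eps) by (apply Rdiv_lt_0_compat; lra).
  assert (Hd_eps : 1 < eps * d).
  { replace 1 with (eps * (1 / eps)) by (field; lra); apply Rmult_lt_compat_l; lra. }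
  set (z := up (w * d)).
  destruct (archimed (w * d)) as [Hz1 Hz2]; fold z in Hz1, Hz2.
  exists (to_nat (to_nat (Z.to_nat z, Z.to_nat (- z)), s)); split.
  - assert (HN : (N < s)%nat) by (apply INR_lt; lra).
    pose proof (to_nat_non_decreasing (to_nat (Z.to_nat z, Z.to_nat (- z))) s); lia.
  - unfold rat_enum; rewrite !cancel_of_to; fold d.
    replace (Z.of_nat (Z.to_nat z) - Z.of_nat (Z.to_nat (- z)))%Z with z by lia.
    replace (IZR z / d - w) with ((IZR z - w * d) / d) by (field; lra).
    rewrite Rabs_right by (left; apply Rdiv_pos_pos; lra).
    apply (Rmult_lt_reg_r d); [lra |].
    replace ((IZR z - w * d) / d * d) with (IZR z - w * d) by (field; lra).
    lra.
Qed.

Definition odd_dyadic (y : R) (n : nat) : Prop :=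
  exists j : Z, y * 2 ^ n = IZR (2 * j + 1).

Lemma odd_dyadic_unique y n m : odd_dyadic y n -> odd_dyadic y m -> n = m.
Proof.
  assert (Hlt : forall n m, odd_dyadic y n -> odd_dyadic y m -> (n < m)%nat -> False).
  { intros k l [j Hj] [j' Hj'] Hkl.
    replace l with (k + S (l - k - 1))%nat in Hj' by lia.
    rewrite pow_add, <- Rmult_assoc, Hj, (pow_IZR 2), <- mult_IZR in Hj'.
    apply eq_IZR in Hj'.
    rewrite Nat2Z.inj_succ, Z.pow_succ_r in Hj' by lia.
    lia. }
  intros Hn Hm; destruct (Nat.lt_trichotomy n m) as [H | [H | H]];
    [exfalso; eauto | exact H | exfalso; eauto].
Qed.

(* Arbitrary (but irrelevant) when [y] is not an odd multiple of a power of 1/2. *)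
Definition dyadic_order (y : R) : nat := epsilon (inhabits 0%nat) (odd_dyadic y).

Definition scramble (y : R) : R := rat_enum (dyadic_order y).

Lemma scramble_odd_dyadic y n : odd_dyadic y n -> scramble y = rat_enum n.
Proof.
  intros H; unfold scramble; f_equal.
  apply (odd_dyadic_unique y); [| exact H].
  apply (epsilon_spec (inhabits 0%nat) (odd_dyadic y)); eauto.
Qed.

Lemma scramble_approx b d w eps : d > 0 -> eps > 0 ->
  exists y, Rabs (y - b) < d /\ Rabs (scramble y - w) < eps.
Proof.
  intros Hd He.
  destruct (Pow_x_infinity 2 ltac:(rewrite Rabs_right; lra) (4 / d)) as [N HN].
  destruct (rat_enum_approx w eps N He) as [n [Hn Hv]].
  specialize (HN n Hn); rewrite Rabs_right in HN by (apply Rle_ge, pow_le; lra).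
  assert (Hp : 0 < 2 ^ n) by (apply pow_lt; lra).
  assert (H4 : 4 <= 2 ^ n * d).
  { replace 4 with (4 / d * d) by (field; lra); apply Rmult_le_compat_r; lra. }
  set (j := up (b * 2 ^ n / 2)).
  destruct (archimed (b * 2 ^ n / 2)) as [Hj1 Hj2]; fold j in Hj1, Hj2.
  exists (IZR (2 * j + 1) / 2 ^ n); split.
  - rewrite plus_IZR, mult_IZR.
    replace ((IZR 2 * IZR j + IZR 1) / 2 ^ n - b)
      with ((2 * IZR j + 1 - b * 2 ^ n) / 2 ^ n) by (simpl; field; lra).
    rewrite Rabs_right by (left; apply Rdiv_pos_pos; lra).
    apply (Rmult_lt_reg_r (2 ^ n)); [exact Hp |].
    replace ((2 * IZR j + 1 - b * 2 ^ n) / 2 ^ n * 2 ^ n)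
      with (2 * IZR j + 1 - b * 2 ^ n) by (field; lra).
    lra.
  - rewrite (scramble_odd_dyadic _ n); [exact Hv |].
    exists j; field; lra.
Qed.

Definition sin_scramble (x y : R) : R := sin (x * PI) * scramble y.

Lemma sin_scramble_continuous y : continuity (fun x => sin_scramble x y).
Proof.
  apply continuity_mult; [| apply continuity_const; intros ? ?; reflexivity].
  apply (continuity_comp (fun x => x * PI) sin); [| exact continuity_sin].
  apply continuity_mult; [apply derivable_continuous, derivable_id |].
  apply continuity_const; intros ? ?; reflexivity.
Qed.

Lemma sin_scramble_zero_lines M : exists c, M < c /\ forall y, sin_scramble c y = 0.
Proof.
  exists (IZR (up M)); split; [apply archimed |].
  intros y; unfold sin_scramble; rewrite sin_eq_0_1 by eauto; ring.
Qed.

Lemma sin_PI_nonzero_near a d : d > 0 -> exists x, Rabs (x - a) < d /\ sin (x * PI) <> 0.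
Proof.
  intros Hd; destruct (Req_dec (sin (a * PI)) 0) as [Ha | Ha].
  - pose proof (Rmin_l (d / 2) (1 / 2)) as He1; pose proof (Rmin_r (d / 2) (1 / 2)) as He2.
    set (e := Rmin (d / 2) (1 / 2)) in *.
    assert (He : 0 < e) by (apply Rmin_pos; lra).
    exists (a + e); split.
    + replace (a + e - a) with e by ring; rewrite Rabs_right; lra.
    + intros Hae; pose proof PI_RGT_0.
      destruct (sin_eq_0_0 _ Ha) as [k Hk]; destruct (sin_eq_0_0 _ Hae) as [k' Hk'].
      apply Rmult_eq_reg_r in Hk, Hk'; [| lra | lra].
      assert (Hkk : IZR (k' - k) = e) by (rewrite minus_IZR; lra).
      assert (0 < IZR (k' - k) < 1) as [Hlo Hhi] by lra.
      apply lt_IZR in Hlo; apply lt_IZR in Hhi; lia.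
  - exists a; split; [rewrite Rminus_diag, Rabs_R0; lra | exact Ha].
Qed.

Lemma sin_scramble_graph_dense : graph_dense sin_scramble.
Proof.
  intros a b w r Hr.
  destruct (sin_PI_nonzero_near a r Hr) as [x [Hx Hs]].
  set (s := sin (x * PI)) in Hs.
  assert (Has : 0 < Rabs s) by (apply Rabs_pos_lt; exact Hs).
  destruct (scramble_approx b r (w / s) (r / Rabs s)) as [y [Hy Hh]];
    [exact Hr | apply Rdiv_lt_0_compat; lra |].
  exists x, y; repeat split; [exact Hx | exact Hy |].
  unfold sin_scramble; fold s.
  replace (s * scramble y - w) with (s * (scramble y - w / s)) by (field; exact Hs).
  rewrite Rabs_mult.
  apply (Rmult_lt_compat_l (Rabs s)) in Hh; [| exact Has].
  replace (Rabs s * (r / Rabs s)) with r in Hh by (field; lra).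
  exact Hh.
Qed.

Theorem theorem1 :
  exists P : R -> (R3 -> Prop),
    (forall i j p, P i p -> P j p -> i = j) /\
    (forall p : R3, exists i, P i p) /\
    (forall i, arcwise_connected (P i) /\ dense3 (P i)).
Proof.
  exists (level_set sin_scramble); split; [| split].
  - intros i j [[x y] z] Hi Hj; simpl in Hi, Hj; lra.
  - intros [[x y] z]; exists (z - sin_scramble x y); reflexivity.
  - intros i; split.
    + apply level_set_arcwise_connected;
        [exact sin_scramble_continuous | exact sin_scramble_zero_lines].
    + exact (level_set_dense sin_scramble i sin_scramble_graph_dense).
Qed.
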